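(* In the setting below, if $\eta \geq \eta_0$ and an oscillation happens at iteration $t$, then $\hat{w}_{t+1} \geq (1+\gamma^2)\hat{w}_t$.
   Context: Dimension $d=2$. Data $x_1,\dots,x_n\in\mathbb{R}^2$ with $\|x_i\|\le 1$, linearly separable (some $w$ has $\langle w,x_i\rangle>0$ for all $i$). $F(w) = \frac{1}{n}\sum_{i=1}^n \log(1+\exp(-\langle w, x_i\rangle))$. Maximum margin $\gamma = \max_{\|w\|=1}\min_i \langle w, x_i\rangle$ with maximizer the unit vector $w_*$; $v_*$ is a fixed unit vector orthogonal to $w_*$. Gradient descent: $w_0=0$, $w_{t+1} = w_t - \eta\nabla F(w_t)$ with constant $\eta>0$. $\hat{w}_t = \langle w_t, w_*\rangle$, $\tilde{w}_t = \langle w_t, v_*\rangle$. $\eta_0 = \max(n, \frac{32}{\gamma^2}\log\frac{256}{\gamma^2})$. $\lambda = \frac{1}{\gamma}\log\frac{1}{\exp(1/(8\eta))-1}$. An oscillation happens at iteration $t\ge 0$ if all of: (1) $\hat{w}_t \geq \lambda$; (2) $F(w_t) > 1/(8\eta)$ and $F(w_{t+1}) > 1/(8\eta)$; (3) $\tilde{w}_{t+1}\tilde{w}_t < 0$. *)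

From Stdlib Require Import Reals Lra.
Open Scope R_scope.

Definition vec := (R * R)%type.
Definition dot (u v : vec) : R := fst u * fst v + snd u * snd v.
Definition vnorm (u : vec) : R := sqrt (dot u u).
Definition vadd (u v : vec) : vec := (fst u + fst v, snd u + snd v).
Definition vscale (a : R) (u : vec) : vec := (a * fst u, a * snd u).
Definition vzero : vec := (0, 0).

Fixpoint sumR (n : nat) (f : nat -> R) : R :=
  match n with O => 0 | S k => sumR k f + f k end.
Fixpoint vsum (n : nat) (f : nat -> vec) : vec :=
  match n with O => vzero | S k => vadd (vsum k f) (f k) end.

Definition F (n : nat) (x : nat -> vec) (w : vec) : R :=
  / INR n * sumR n (fun i => ln (1 + exp (- dot w (x i)))).

Definition gradF (n : nat) (x : nat -> vec) (w : vec) : vec :=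
  vscale (- / INR n) (vsum n (fun i => vscale (/ (1 + exp (dot w (x i)))) (x i))).

Fixpoint gd (n : nat) (x : nat -> vec) (eta : R) (t : nat) : vec :=
  match t with
  | O => vzero
  | S k => let w := gd n x eta k in vadd w (vscale (- eta) (gradF n x w))
  end.

(* wstar is a unit maximizer of w |-> min_i <w, x_i> over unit vectors,
   and gamma is the maximum value (the maximum margin). *)
Definition is_max_margin (n : nat) (x : nat -> vec) (wstar : vec) (gamma : R) : Prop :=
  vnorm wstar = 1 /\
  (forall i, (i < n)%nat -> gamma <= dot wstar (x i)) /\
  (exists i, (i < n)%nat /\ dot wstar (x i) = gamma) /\
  (forall w, vnorm w = 1 -> exists i, (i < n)%nat /\ dot w (x i) <= gamma).

Definition eta0 (n : nat) (gamma : R) : R :=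
  Rmax (INR n) (32 / gamma ^ 2 * ln (256 / gamma ^ 2)).

Definition lambda (gamma eta : R) : R :=
  / gamma * ln (/ (exp (1 / (8 * eta)) - 1)).

Definition oscillation (n : nat) (x : nat -> vec) (wstar vstar : vec)
    (gamma eta : R) (t : nat) : Prop :=
  let wt := gd n x eta t in
  let wt1 := gd n x eta (S t) in
  dot wt wstar >= lambda gamma eta /\
  (F n x wt > 1 / (8 * eta) /\ F n x wt1 > 1 / (8 * eta)) /\
  dot wt1 vstar * dot wt vstar < 0.

From Stdlib Require Import Reals Lra Lia Psatz.
Open Scope R_scope.

(* Write p, u for the coordinates of w_t along w* and v*, and p', u' for those of w_(t+1).
   A loss above 1/(8 eta) forces some sample margin below c = -ln(exp(1/(8 eta)) - 1) <= ln(8 eta),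
   and decomposing x_i along w*, v* turns this into gamma p - |u| < c and gamma p' - |u'| < c.
   One gradient step moves the w* coordinate by at least gamma D and the v* coordinate by at most
   D, where D is eta/n times the total logistic weight at w_t. Because u and u' have opposite signs,
   |u| + |u'| = |u' - u| <= D, hence p' - p >= gamma (|u| + |u'|) > 2 gamma^2 p - 2 gamma c, which is
   at least gamma^2 p once gamma p >= 2 c. The last inequality holds since the first step already
   gives p >= eta gamma / 2, and eta >= 32/gamma^2 ln(256/gamma^2) implies eta gamma^2 >= 4 ln(8 eta). *)

Lemma sumR_ext n f g : (forall i, (i < n)%nat -> f i = g i) -> sumR n f = sumR n g.
Proof.
  induction n as [|n IH]; intros Hfg; simpl; [reflexivity|].
  rewrite IH by (intros; apply Hfg; lia).
  rewrite Hfg by lia; reflexivity.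
Qed.

Lemma sumR_le n f g : (forall i, (i < n)%nat -> f i <= g i) -> sumR n f <= sumR n g.
Proof.
  induction n as [|n IH]; intros Hfg; simpl; [lra|].
  assert (sumR n f <= sumR n g) by (apply IH; intros; apply Hfg; lia).
  assert (f n <= g n) by (apply Hfg; lia).
  lra.
Qed.

Lemma sumR_const n c : sumR n (fun _ => c) = INR n * c.
Proof. induction n as [|n IH]; simpl sumR; [simpl; ring|]. rewrite IH, S_INR; ring. Qed.

Lemma sumR_scal_l n c f : sumR n (fun i => c * f i) = c * sumR n f.
Proof. induction n as [|n IH]; simpl; [ring|]. rewrite IH; ring. Qed.

Lemma Rabs_sumR_le n f : Rabs (sumR n f) <= sumR n (fun i => Rabs (f i)).
Proof.
  induction n as [|n IH]; simpl; [rewrite Rabs_R0; lra|].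
  pose proof (Rabs_triang (sumR n f) (f n)); lra.
Qed.

Lemma sumR_gt_exists n c f :
  INR n * c < sumR n f -> exists i, (i < n)%nat /\ c < f i.
Proof.
  induction n as [|n IH]; simpl sumR; intros Hsum; [simpl in Hsum; lra|].
  destruct (Rlt_le_dec c (f n)) as [Hc|Hc]; [exists n; split; [lia|exact Hc]|].
  destruct IH as [i [Hi Hci]]; [rewrite S_INR in Hsum; lra|].
  exists i; split; [lia|exact Hci].
Qed.

Lemma dot_comm u v : dot u v = dot v u.
Proof. unfold dot; ring. Qed.

Lemma dot_vadd_l u v y : dot (vadd u v) y = dot u y + dot v y.
Proof. unfold dot, vadd; simpl; ring. Qed.

Lemma dot_vscale_l a u y : dot (vscale a u) y = a * dot u y.
Proof. unfold dot, vscale; simpl; ring. Qed.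

Lemma dot_vzero_l y : dot vzero y = 0.
Proof. unfold dot, vzero; simpl; ring. Qed.

Lemma dot_vsum_l n f y : dot (vsum n f) y = sumR n (fun i => dot (f i) y).
Proof.
  induction n as [|n IH]; simpl; [apply dot_vzero_l|].
  rewrite dot_vadd_l, IH; reflexivity.
Qed.

Lemma dot_self_ge0 u : 0 <= dot u u.
Proof. unfold dot; nra. Qed.

Lemma vnorm_sqr u : vnorm u * vnorm u = dot u u.
Proof. apply sqrt_sqrt, dot_self_ge0. Qed.

Lemma dot_sqr_le u v : dot u v * dot u v <= dot u u * dot v v.
Proof.
  destruct u as [a b], v as [c d]; unfold dot; simpl.
  assert (Lagrange : (a*a + b*b) * (c*c + d*d) = (a*c + b*d) * (a*c + b*d) + (a*d - b*c) * (a*d - b*c))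
    by ring.
  pose proof (Rle_0_sqr (a*d - b*c)); unfold Rsqr in *; lra.
Qed.

Lemma Rabs_dot_le u v : Rabs (dot u v) <= vnorm u * vnorm v.
Proof.
  apply Rsqr_incr_0_var; [|apply Rmult_le_pos; apply sqrt_pos].
  rewrite <- Rsqr_abs; unfold Rsqr.
  replace (vnorm u * vnorm v * (vnorm u * vnorm v)) with (vnorm u * vnorm u * (vnorm v * vnorm v))
    by ring.
  rewrite !vnorm_sqr; apply dot_sqr_le.
Qed.

Lemma vnorm_vscale a u : vnorm (vscale a u) = Rabs a * vnorm u.
Proof.
  unfold vnorm; rewrite dot_vscale_l, dot_comm, dot_vscale_l, <- Rmult_assoc.
  rewrite sqrt_mult_alt by apply Rle_0_sqr.
  rewrite <- sqrt_Rsqr_abs; reflexivity.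
Qed.

Lemma dot_self_unit u : vnorm u = 1 -> dot u u = 1.
Proof. intros Hu; rewrite <- vnorm_sqr, Hu; ring. Qed.

Lemma Rabs_dot_unit_le u v : vnorm u <= 1 -> vnorm v = 1 -> Rabs (dot u v) <= 1.
Proof. intros Hu Hv; pose proof (Rabs_dot_le u v); rewrite Hv in *; lra. Qed.

Lemma vnorm_pos_of_dot_neq0 u y : dot u y <> 0 -> 0 < vnorm u.
Proof.
  intros Huy.
  pose proof (Rabs_dot_le u y); pose proof (Rabs_pos_lt _ Huy).
  destruct (sqrt_pos (dot u u)) as [Hpos|Hzero]; [exact Hpos|].
  unfold vnorm in *; rewrite <- Hzero in *; lra.
Qed.

Lemma orthonormal_rot e f : dot e e = 1 -> dot e f = 0 ->
  f = vscale (fst e * snd f - snd e * fst f) (- snd e, fst e).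
Proof.
  destruct e as [e1 e2], f as [f1 f2]; unfold dot, vscale; simpl; intros He Hef.
  assert (E1 : f1 - (e1 * f2 - e2 * f1) * - e2 = f1 * (1 - (e1 * e1 + e2 * e2)) + e1 * (e1 * f1 + e2 * f2))
    by ring.
  assert (E2 : f2 - (e1 * f2 - e2 * f1) * e1 = f2 * (1 - (e1 * e1 + e2 * e2)) + e2 * (e1 * f1 + e2 * f2))
    by ring.
  rewrite He, Hef in E1, E2.
  f_equal; lra.
Qed.

Lemma dot_orthonormal_decomp w y e f :
  dot e e = 1 -> dot f f = 1 -> dot e f = 0 ->
  dot w y = dot w e * dot y e + dot w f * dot y f.
Proof.
  intros He Hf Hef.
  pose proof (orthonormal_rot e f He Hef) as Ef.
  set (d := fst e * snd f - snd e * fst f) in Ef; clearbody d; subst f.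
  destruct w as [w1 w2], y as [y1 y2], e as [e1 e2].
  unfold dot, vscale in *; simpl in *.
  assert (Hd : d * d = 1).
  { rewrite <- Hf; transitivity (d * d * (e1 * e1 + e2 * e2)); [rewrite He|]; ring. }
  replace ((w1 * e1 + w2 * e2) * (y1 * e1 + y2 * e2)
           + (w1 * (d * - e2) + w2 * (d * e1)) * (y1 * (d * - e2) + y2 * (d * e1)))
    with ((w1 * y1 + w2 * y2) * (e1 * e1 + e2 * e2)
          + (d * d - 1) * ((w2 * e1 - w1 * e2) * (y2 * e1 - y1 * e2))) by ring.
  rewrite He, Hd; ring.
Qed.

Definition logistic_weight (s : R) : R := / (1 + exp s).

Definition total_weight (n : nat) (x : nat -> vec) (w : vec) : R :=
  sumR n (fun i => logistic_weight (dot w (x i))).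

Definition margin_threshold (eta : R) : R := - ln (exp (1 / (8 * eta)) - 1).

Lemma logistic_weight_pos s : 0 < logistic_weight s.
Proof. apply Rinv_0_lt_compat; pose proof (exp_pos s); lra. Qed.

Lemma total_weight_ge0 n x w : 0 <= total_weight n x w.
Proof.
  rewrite <- (Rmult_0_r (INR n)), <- sumR_const.
  apply sumR_le; intros i _; apply Rlt_le, logistic_weight_pos.
Qed.

Lemma total_weight_vzero n x : total_weight n x vzero = INR n / 2.
Proof.
  unfold total_weight, logistic_weight.
  rewrite (sumR_ext n _ (fun _ => / 2)), sumR_const; [reflexivity|].
  intros i _; rewrite dot_vzero_l, exp_0; f_equal; ring.
Qed.

Lemma exists_small_margin_of_loss_gt n x w a : (0 < n)%nat ->
  F n x w > ln (1 + exp (- a)) -> exists i, (i < n)%nat /\ dot w (x i) < a.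
Proof.
  intros Hn HF.
  assert (Hn' : 0 < INR n) by (apply lt_0_INR; lia).
  destruct (sumR_gt_exists n (ln (1 + exp (- a))) (fun i => ln (1 + exp (- dot w (x i)))))
    as [i [Hi Hlt]].
  { unfold F in HF.
    apply Rmult_lt_reg_l with (/ INR n); [apply Rinv_0_lt_compat; lra|].
    rewrite <- Rmult_assoc, Rinv_l, Rmult_1_l by lra; lra. }
  exists i; split; [exact Hi|].
  pose proof (exp_pos (- a)).
  apply ln_lt_inv in Hlt; [|lra|pose proof (exp_pos (- dot w (x i))); lra].
  assert (Hexp : exp (- a) < exp (- dot w (x i))) by lra.
  apply exp_lt_inv in Hexp; lra.
Qed.

Lemma exp_sub_1_gt q : 0 < q -> q < exp q - 1.
Proof. intros Hq; pose proof (exp_ineq1 q); lra. Qed.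

Lemma logistic_loss_margin_threshold eta : 0 < eta ->
  ln (1 + exp (- margin_threshold eta)) = 1 / (8 * eta).
Proof.
  intros Heta; unfold margin_threshold.
  assert (Hq : 0 < 1 / (8 * eta)) by (apply Rdiv_lt_0_compat; lra).
  pose proof (exp_sub_1_gt _ Hq).
  rewrite Ropp_involutive, exp_ln by lra.
  replace (1 + (exp (1 / (8 * eta)) - 1)) with (exp (1 / (8 * eta))) by ring.
  apply ln_exp.
Qed.

Lemma margin_threshold_le eta : 0 < eta -> margin_threshold eta <= ln (8 * eta).
Proof.
  intros Heta; unfold margin_threshold, Rdiv; rewrite Rmult_1_l.
  assert (Hq : 0 < / (8 * eta)) by (apply Rinv_0_lt_compat; lra).
  pose proof (exp_sub_1_gt _ Hq).
  rewrite <- (Ropp_involutive (ln (8 * eta))), <- (ln_Rinv (8 * eta)) by lra.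
  apply Ropp_le_contravar, Rlt_le, ln_increasing; lra.
Qed.

(* Write [8 eta = (K / 8) (64 / gamma^2)] with [K = eta gamma^2] and use [ln y <= y - 1]. *)
Lemma ln_step_size_le gamma eta : 0 < gamma -> 0 < eta ->
  32 / gamma ^ 2 * ln (256 / gamma ^ 2) <= eta -> 4 * ln (8 * eta) <= eta * gamma ^ 2.
Proof.
  intros Hg Heta Hbig.
  set (K := eta * gamma ^ 2).
  assert (Hg2 : 0 < gamma ^ 2) by (apply pow_lt; lra).
  assert (HK : 0 < K) by (apply Rmult_lt_0_compat; lra).
  assert (Hsplit : 8 * eta = K / 8 * (64 / gamma ^ 2)) by (unfold K; field; lra).
  assert (Hlog : ln (64 / gamma ^ 2) < ln (256 / gamma ^ 2)).
  { apply ln_increasing; unfold Rdiv;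
      [apply Rmult_lt_0_compat; [lra|apply Rinv_0_lt_compat; lra]|].
    apply Rmult_lt_compat_r; [apply Rinv_0_lt_compat|]; lra. }
  assert (HKlog : 32 * ln (256 / gamma ^ 2) <= K).
  { unfold K; replace (32 * ln (256 / gamma ^ 2))
      with (32 / gamma ^ 2 * ln (256 / gamma ^ 2) * gamma ^ 2) by (field; lra).
    apply Rmult_le_compat_r; lra. }
  assert (HlnK : ln (K / 8) <= K / 8 - 1).
  { pose proof (exp_ineq1_le (ln (K / 8))); rewrite exp_ln in * by lra; lra. }
  rewrite Hsplit, ln_mult by (unfold Rdiv; apply Rmult_lt_0_compat; try apply Rinv_0_lt_compat; lra).
  fold K; lra.
Qed.

Lemma margin_threshold_le_eta0 n gamma eta : 0 < gamma -> 0 < eta ->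
  eta >= eta0 n gamma -> 4 * margin_threshold eta <= eta * gamma ^ 2.
Proof.
  intros Hg Heta Heta0; unfold eta0 in Heta0.
  pose proof (Rmax_r (INR n) (32 / gamma ^ 2 * ln (256 / gamma ^ 2))).
  pose proof (ln_step_size_le gamma eta Hg Heta ltac:(lra)).
  pose proof (margin_threshold_le eta Heta); lra.
Qed.

Lemma Rabs_sub_opposite_signs u u' : u' * u < 0 -> Rabs (u' - u) = Rabs u' + Rabs u.
Proof.
  intros Hsign.
  destruct (Rlt_le_dec u 0), (Rlt_le_dec u' 0); [nra| | |nra].
  - rewrite (Rabs_left u), (Rabs_right u'), (Rabs_right (u' - u)); lra.
  - assert (u <> 0) by (intros ->; lra).
    rewrite (Rabs_right u), (Rabs_left u'), (Rabs_left (u' - u)); lra.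
Qed.

Lemma growth_of_sign_change gamma c D p p' u u' :
  0 < gamma -> 2 * c <= gamma * p ->
  gamma * D <= p' - p -> Rabs (u' - u) <= D -> u' * u < 0 ->
  gamma * p - Rabs u < c -> gamma * p' - Rabs u' < c ->
  (1 + gamma ^ 2) * p <= p'.
Proof.
  intros Hg Hc Hp Hu Hsign Hmu Hmu'.
  rewrite Rabs_sub_opposite_signs in Hu by exact Hsign.
  assert (Hmono : p <= p').
  { pose proof (Rabs_pos u); pose proof (Rabs_pos u').
    assert (0 <= gamma * D) by (apply Rmult_le_pos; lra); lra. }
  assert (Hmono' : gamma * p <= gamma * p') by (apply Rmult_le_compat_l; lra).
  assert (Hstep : gamma * (2 * gamma * p - 2 * c) <= gamma * D)
    by (apply Rmult_le_compat_l; lra).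
  assert (Hslack : 0 <= gamma * (gamma * p - 2 * c)) by (apply Rmult_le_pos; lra).
  simpl; lra.
Qed.

Lemma margin_bound_of_loss_gt n x wstar vstar gamma w a :
  (0 < n)%nat ->
  (forall i, (i < n)%nat -> gamma <= dot (x i) wstar) ->
  (forall i, (i < n)%nat -> Rabs (dot (x i) vstar) <= 1) ->
  dot wstar wstar = 1 -> dot vstar vstar = 1 -> dot wstar vstar = 0 ->
  0 <= dot w wstar -> F n x w > ln (1 + exp (- a)) ->
  gamma * dot w wstar - Rabs (dot w vstar) < a.
Proof.
  intros Hn Hw Hv Hws Hvs Hwv Hp HF.
  destruct (exists_small_margin_of_loss_gt n x w a Hn HF) as [i [Hi Hlt]].
  rewrite (dot_orthonormal_decomp w (x i) wstar vstar Hws Hvs Hwv) in Hlt.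
  pose proof (Hw i Hi); pose proof (Hv i Hi).
  assert (gamma * dot w wstar <= dot w wstar * dot (x i) wstar) by nra.
  assert (- Rabs (dot w vstar) <= dot w vstar * dot (x i) vstar).
  { pose proof (Rle_abs (- (dot w vstar * dot (x i) vstar))) as Habs.
    rewrite Rabs_Ropp, Rabs_mult in Habs.
    assert (Rabs (dot w vstar) * Rabs (dot (x i) vstar) <= Rabs (dot w vstar))
      by (pose proof (Rabs_pos (dot w vstar)); nra).
    lra. }
  lra.
Qed.

Section GradientDescent.

Variables (n : nat) (x : nat -> vec) (eta : R).
Hypotheses (Hn : (0 < n)%nat) (Heta : 0 < eta).

Lemma gd_S_dot k y :
  dot (gd n x eta (S k)) y = dot (gd n x eta k) y
    + eta / INR n * sumR n (fun i => logistic_weight (dot (gd n x eta k) (x i)) * dot (x i) y).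
Proof.
  simpl gd; unfold gradF.
  rewrite dot_vadd_l, !dot_vscale_l, dot_vsum_l.
  rewrite (sumR_ext n _ (fun i => logistic_weight (dot (gd n x eta k) (x i)) * dot (x i) y))
    by (intros; apply dot_vscale_l).
  unfold Rdiv; ring.
Qed.

Let step_pos : 0 < eta / INR n.
Proof. apply Rdiv_lt_0_compat; [lra|apply lt_0_INR; lia]. Qed.

Lemma gd_increment_ge c y k :
  (forall i, (i < n)%nat -> c <= dot (x i) y) ->
  c * (eta / INR n * total_weight n x (gd n x eta k))
    <= dot (gd n x eta (S k)) y - dot (gd n x eta k) y.
Proof.
  intros Hc; rewrite gd_S_dot; unfold total_weight.
  replace (c * (eta / INR n * _)) with
    (eta / INR n * sumR n (fun i => c * logistic_weight (dot (gd n x eta k) (x i))))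
    by (rewrite sumR_scal_l; ring).
  assert (Hsum : sumR n (fun i => c * logistic_weight (dot (gd n x eta k) (x i)))
                 <= sumR n (fun i => logistic_weight (dot (gd n x eta k) (x i)) * dot (x i) y)).
  { apply sumR_le; intros i Hi.
    pose proof (logistic_weight_pos (dot (gd n x eta k) (x i))); pose proof (Hc i Hi); nra. }
  pose proof (Rmult_le_compat_l _ _ _ (Rlt_le _ _ step_pos) Hsum); lra.
Qed.

Lemma gd_increment_abs_le y k :
  (forall i, (i < n)%nat -> Rabs (dot (x i) y) <= 1) ->
  Rabs (dot (gd n x eta (S k)) y - dot (gd n x eta k) y)
    <= eta / INR n * total_weight n x (gd n x eta k).
Proof.
  intros Hb; rewrite gd_S_dot.
  replace (_ + _ - _) with
    (eta / INR n * sumR n (fun i => logistic_weight (dot (gd n x eta k) (x i)) * dot (x i) y))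
    by ring.
  rewrite Rabs_mult, (Rabs_right (eta / INR n)) by lra.
  apply Rmult_le_compat_l; [lra|].
  eapply Rle_trans; [apply Rabs_sumR_le|].
  apply sumR_le; intros i Hi.
  pose proof (logistic_weight_pos (dot (gd n x eta k) (x i))); pose proof (Hb i Hi).
  rewrite Rabs_mult, (Rabs_right (logistic_weight _)) by lra; nra.
Qed.

Lemma gd_S_dot_ge c y k :
  0 <= c -> (forall i, (i < n)%nat -> c <= dot (x i) y) ->
  eta * c / 2 <= dot (gd n x eta (S k)) y.
Proof.
  intros Hc0 Hc.
  induction k as [|k IH].
  - pose proof (gd_increment_ge c y 0 Hc) as Hinc.
    change (gd n x eta 0) with vzero in Hinc; rewrite dot_vzero_l, total_weight_vzero in Hinc.
    assert (INR n <> 0) by (apply not_0_INR; lia).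
    replace (eta * c / 2) with (c * (eta / INR n * (INR n / 2))) by (field; lra); lra.
  - pose proof (gd_increment_ge c y (S k) Hc).
    pose proof (Rmult_le_pos _ _ Hc0
      (Rmult_le_pos _ _ (Rlt_le _ _ step_pos) (total_weight_ge0 n x (gd n x eta (S k))))).
    lra.
Qed.

End GradientDescent.

Lemma max_margin_pos n x wstar gamma : (0 < n)%nat ->
  (exists w, forall i, (i < n)%nat -> 0 < dot w (x i)) ->
  is_max_margin n x wstar gamma -> 0 < gamma.
Proof.
  intros Hn [w0 Hw0] [_ [_ [_ Hmax]]].
  assert (Hr : 0 < vnorm w0).
  { apply (vnorm_pos_of_dot_neq0 w0 (x 0%nat)); specialize (Hw0 0%nat Hn); lra. }
  assert (Hr' : 0 < / vnorm w0) by (apply Rinv_0_lt_compat; lra).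
  destruct (Hmax (vscale (/ vnorm w0) w0)) as [i [Hi Hle]].
  { rewrite vnorm_vscale, Rabs_right by lra; field; lra. }
  rewrite dot_vscale_l in Hle.
  pose proof (Rmult_lt_0_compat _ _ Hr' (Hw0 i Hi)); lra.
Qed.

Theorem lemma3 (n : nat) (x : nat -> vec) (wstar vstar : vec) (gamma eta : R) (t : nat) :
  (0 < n)%nat ->
  (forall i, (i < n)%nat -> vnorm (x i) <= 1) ->
  (exists w, forall i, (i < n)%nat -> 0 < dot w (x i)) ->
  is_max_margin n x wstar gamma ->
  vnorm vstar = 1 -> dot wstar vstar = 0 ->
  0 < eta -> eta >= eta0 n gamma ->
  oscillation n x wstar vstar gamma eta t ->
  dot (gd n x eta (S t)) wstar >= (1 + gamma ^ 2) * dot (gd n x eta t) wstar.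
Proof.
  intros Hn Hx Hsep Hmm Hvs Hwv Heta Heta0 [_ [[HF HF'] Hsign]].
  pose proof (max_margin_pos n x wstar gamma Hn Hsep Hmm) as Hg.
  destruct Hmm as [Hws [Hmargin _]].
  assert (Ha : forall i, (i < n)%nat -> gamma <= dot (x i) wstar)
    by (intros; rewrite dot_comm; auto).
  assert (Hb : forall i, (i < n)%nat -> Rabs (dot (x i) vstar) <= 1)
    by (intros; apply Rabs_dot_unit_le; auto).
  apply dot_self_unit in Hws, Hvs.
  destruct t as [|k].
  { change (gd n x eta 0) with vzero in Hsign; rewrite dot_vzero_l in Hsign; lra. }
  assert (Hp : forall j, eta * gamma / 2 <= dot (gd n x eta (S j)) wstar)
    by (intros; apply gd_S_dot_ge; auto; lra).
  assert (Hp0 : 0 <= eta * gamma / 2) by (pose proof (Rmult_lt_0_compat _ _ Heta Hg); lra).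
  assert (Hc : 2 * margin_threshold eta <= gamma * dot (gd n x eta (S k)) wstar).
  { pose proof (margin_threshold_le_eta0 n gamma eta Hg Heta Heta0).
    pose proof (Rmult_le_compat_l _ _ _ (Rlt_le _ _ Hg) (Hp k)) as Hgp.
    replace (gamma * (eta * gamma / 2)) with (eta * gamma ^ 2 / 2) in Hgp by field.
    lra. }
  rewrite <- logistic_loss_margin_threshold in HF, HF' by exact Heta.
  apply Rle_ge; eapply (growth_of_sign_change gamma (margin_threshold eta)
    (eta / INR n * total_weight n x (gd n x eta (S k))) _ _ _ _ Hg Hc); [| |exact Hsign| |].
  - apply gd_increment_ge; auto.
  - apply gd_increment_abs_le; auto.
  - apply (margin_bound_of_loss_gt n x); auto.
    pose proof (Hp k); lra.
  - apply (margin_bound_of_loss_gt n x); auto.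
    pose proof (Hp (S k)); lra.
Qed.
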